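(* Let $\mathbb{F}\in\{\mathbb{R},\mathbb{C}\}$, $M>N$, and $0\le k\le M$. If $\Phi\in\mathcal{P}(M,N)$ and $\Psi\in\mathcal{P}(M,M-N)$ are Naimark complements, then $\Phi$ maximizes $NE_k$ over $\mathcal{P}(M,N)$ if and only if $\Psi$ maximizes $NE_{M-k}$ over $\mathcal{P}(M,M-N)$.
   Context: $\mathcal{P}(M,n)$ is the set of Parseval frames for $\mathbb{F}^n$ with $M$ vectors, i.e. families $\{\varphi_i\}_{i=1}^M\subseteq\mathbb{F}^n$ whose $n\times M$ matrix $\Phi$ satisfies $\Phi\Phi^*=I$. $\Phi\in\mathcal{P}(M,N)$ and $\Psi\in\mathcal{P}(M,M-N)$ are Naimark complements if $\Psi^*\Psi=I-\Phi^*\Phi$. For $K\subseteq[M]$, $\Phi_K$ is the submatrix of columns indexed by $K$. The nuclear norm $\|F\|_*$ is the sum of the singular values of $F$, and $NE_k(\Phi)=\sum_{|K|=k}\|\Phi_K\|_*$. *)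

(* The scalar field F in {R, C} is modelled inside the
   complex numbers C = R[i] over a real number field R : realType:
   the complex case uses all of C, the real case restricts every matrix
   entry to be real (Im = 0). *)
From HB Require Import structures.
From mathcomp Require Import all_boot all_order all_algebra.
From mathcomp Require Import reals complex.
Set Implicit Arguments. Unset Strict Implicit. Unset Printing Implicit Defensive.
Import Order.TTheory GRing.Theory Num.Theory.
Local Open Scope ring_scope.

Section Frames.
Variable C : numClosedFieldType.

Definition adjmx m n (A : 'M[C]_(m, n)) : 'M[C]_(n, m) :=
  \matrix_(i, j) (A j i)^*.

Definition entries_in (realF : bool) m n (A : 'M[C]_(m, n)) : bool :=
  realF ==> [forall i, [forall j, A i j \is Num.real]].

Definition parseval (realF : bool) (M n : nat) (Phi : 'M[C]_(n, M)) : Prop :=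
  entries_in realF Phi /\ Phi *m adjmx Phi = 1%:M.

Definition naimark_compl M N (Phi : 'M[C]_(N, M)) (Psi : 'M[C]_(M - N, M))
  : Prop := adjmx Psi *m Psi = 1%:M - adjmx Phi *m Phi.

Lemma char_poly_splits n (B : 'M[C]_n) :
  exists s : seq C, char_poly B == \prod_(z <- s) ('X - z%:P).
Proof.
have [s Hs] := closed_field_poly_normal (char_poly B).
by exists s; rewrite {1}Hs (monicP (char_poly_monic B)) scale1r.
Qed.

Definition eigenvalues n (B : 'M[C]_n) : seq C := xchoose (char_poly_splits B).

(* singular values of A : the square roots of the eigenvalues of A^* A
   (the extra zero singular values are irrelevant for their sum) *)
Definition singular_values m n (A : 'M[C]_(m, n)) : seq C :=
  [seq sqrtC z | z <- eigenvalues (adjmx A *m A)].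

Definition nuclear_norm m n (A : 'M[C]_(m, n)) : C :=
  \sum_(s <- singular_values A) s.

Definition colsubset n M (Phi : 'M[C]_(n, M)) (K : {set 'I_M}) : 'M[C]_(n, #|K|) :=
  colsub (fun j : 'I_#|K| => enum_val j) Phi.

Definition NE n M (k : nat) (Phi : 'M[C]_(n, M)) : C :=
  \sum_(K : {set 'I_M} | #|K| == k) nuclear_norm (colsubset Phi K).

Definition maximizes_NE (realF : bool) M n k (Phi : 'M[C]_(n, M)) : Prop :=
  forall Phi' : 'M[C]_(n, M), parseval realF Phi' -> NE k Phi' <= NE k Phi.

End Frames.

(* For Naimark complements, Phi^* Phi + Psi^* Psi = I and Psi Psi^* = I.  Fix a set K
   of k columns.  The eigenvalues of Psi_K^* Psi_K are the 1 - t for the eigenvalues t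
   of Phi_K^* Phi_K; Psi_K Psi_K^* has the same nonzero eigenvalues as Psi_K^* Psi_K;
   and Psi_{K^c} Psi_{K^c}^* = I - Psi_K Psi_K^*.  Summing square roots gives
   ||Psi_{K^c}||_* = ||Phi_K||_* + (M - N) - k, hence
   NE_{M-k}(Psi) = NE_k(Phi) + C(M, k) (M - N - k), a shift that does not depend on the
   frames.  Since every Parseval frame, real or complex, has a Naimark complement over
   the same field (complete its rows to an orthonormal basis), maximizers correspond. *)

From HB Require Import structures.
From mathcomp Require Import all_boot all_order all_algebra.
From mathcomp Require Import reals complex ring zify.
Set Implicit Arguments. Unset Strict Implicit. Unset Printing Implicit Defensive.
Import Order.TTheory GRing.Theory Num.Theory.
Local Open Scope ring_scope.

Section Spectrum.
Variable C : numClosedFieldType.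

Lemma adjmxK m n (A : 'M[C]_(m, n)) : adjmx (adjmx A) = A.
Proof. by apply/matrixP => i j; rewrite !mxE conjCK. Qed.

Lemma adjmxM m n p (A : 'M[C]_(m, n)) (B : 'M[C]_(n, p)) :
  adjmx (A *m B) = adjmx B *m adjmx A.
Proof.
apply/matrixP => i j; rewrite !mxE rmorph_sum; apply: eq_bigr => l _.
by rewrite !mxE rmorphM mulrC.
Qed.

Lemma adjmx0 m n : adjmx (0 : 'M[C]_(m, n)) = 0.
Proof. by apply/matrixP => i j; rewrite !mxE rmorph0. Qed.

Lemma adjmxZ m n a (A : 'M[C]_(m, n)) : adjmx (a *: A) = a^* *: adjmx A.
Proof. by apply/matrixP => i j; rewrite !mxE rmorphM. Qed.

Lemma adjmx_col m1 m2 n (A : 'M[C]_(m1, n)) (B : 'M[C]_(m2, n)) :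
  adjmx (col_mx A B) = row_mx (adjmx A) (adjmx B).
Proof. by apply/matrixP => i j; rewrite !mxE; case: splitP => k _; rewrite mxE. Qed.

(* Sylvester's determinant identity, via the two block factorizations of
   [[X, A], [B, 1]]. *)
Lemma char_poly_mulmxC m n (A : 'M[C]_(m, n)) (B : 'M[C]_(n, m)) :
  'X^n * char_poly (A *m B) = 'X^m * char_poly (B *m A).
Proof.
set a := map_mx polyC A; set b := map_mx polyC B.
set D := block_mx ('X%:M : 'M[{poly C}]_m) a b 1%:M.
have lowerD : D *m block_mx 1%:M 0 (- b) 1%:M
              = block_mx (char_poly_mx (A *m B)) a 0 1%:M.
  rewrite mulmx_block !mulmx1 !mul1mx !mulmx0 !add0r mulmxN.
  by rewrite /char_poly_mx map_mxM -/a -/b subrr.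
have upperD : block_mx 1%:M 0 (- b) 'X%:M *m D
              = block_mx 'X%:M a 0 (char_poly_mx (B *m A)).
  rewrite mulmx_block !mul1mx !mul0mx !addr0 mulNmx mul_mx_scalar mul_scalar_mx.
  by rewrite /char_poly_mx map_mxM -/a -/b mulNmx mulmx1 addNr addrC.
have detD : \det D = char_poly (A *m B).
  move/(congr1 determinant): lowerD.
  by rewrite det_mulmx det_lblock det_ublock !det1 !mulr1 => ->.
move/(congr1 determinant): upperD.
by rewrite det_mulmx det_lblock det_ublock detD det1 !det_scalar mul1r.
Qed.

Lemma char_poly_comp_scalar_sub n (a : C) (A : 'M[C]_n) :
  char_poly A \Po (a%:P - 'X) = (-1) ^+ n * char_poly (a%:M - A).
Proof.
rewrite /char_poly -det_map_mx -detZ scaleN1r; congr (\det _).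
apply/matrixP => i j; rewrite !mxE /=.
by case: (i == j); rewrite /= ?mulr1n ?mulr0n comp_polyB !comp_polyC ?comp_polyX
  ?comp_poly0 ?polyCB ?polyC0; ring.
Qed.

Lemma eigenvaluesE n (A : 'M[C]_n) :
  char_poly A = \prod_(z <- eigenvalues A) ('X - z%:P).
Proof. exact/eqP/(xchooseP (char_poly_splits A)). Qed.

Lemma size_eigenvalues n (A : 'M[C]_n) : size (eigenvalues A) = n.
Proof.
by have := size_char_poly A; rewrite eigenvaluesE size_prod_XsubC => -[].
Qed.

Lemma eigenvalues_scalar_sub n (a : C) (A : 'M[C]_n) :
  perm_eq (eigenvalues (a%:M - A)) [seq a - z | z <- eigenvalues A].
Proof.
have sign_prod (s : seq C) :
    (-1) ^+ size s * ((\prod_(z <- s) ('X - z%:P)) \Po (a%:P - 'X))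
    = \prod_(z <- s) ('X - (a - z)%:P).
  rewrite rmorph_prod /=; elim: s => [|z s IH]; first by rewrite !big_nil mulr1.
  rewrite !big_cons /= -IH exprS comp_polyB comp_polyX comp_polyC polyCB; ring.
apply: prod_XsubC_eq; rewrite -eigenvaluesE big_map -sign_prod -eigenvaluesE.
by rewrite char_poly_comp_scalar_sub size_eigenvalues signrMK.
Qed.

Lemma Xn_eq_prod n : 'X^n = \prod_(z <- nseq n (0 : C)) ('X - z%:P).
Proof. by rewrite big_nseq subr0; elim: n => [|n IH] //=; rewrite exprS IH. Qed.

Lemma eigenvalues_mulmxC m n (A : 'M[C]_(m, n)) (B : 'M[C]_(n, m)) :
  perm_eq (eigenvalues (A *m B) ++ nseq n 0) (eigenvalues (B *m A) ++ nseq m 0).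
Proof.
apply: prod_XsubC_eq; rewrite !big_cat /= -!Xn_eq_prod -!eigenvaluesE.
by rewrite mulrC char_poly_mulmxC mulrC.
Qed.

Lemma big_eigenvalues_mulmxC m n (f : C -> C) (A : 'M[C]_(m, n)) (B : 'M[C]_(n, m)) :
  \sum_(z <- eigenvalues (A *m B)) f z + f 0 *+ n
  = \sum_(z <- eigenvalues (B *m A)) f z + f 0 *+ m.
Proof.
have := @perm_big _ (+%R : C -> C -> C) 0 _ _ _ xpredT f (eigenvalues_mulmxC A B).
by rewrite !big_cat /= !big_nseq !iter_addr_0.
Qed.

Lemma big_eigenvalues_scalar_sub n (f : C -> C) (a : C) (A : 'M[C]_n) :
  \sum_(z <- eigenvalues (a%:M - A)) f z = \sum_(z <- eigenvalues A) f (a - z).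
Proof. by rewrite (perm_big _ (eigenvalues_scalar_sub a A)) big_map. Qed.

Lemma nuclear_normE m n (A : 'M[C]_(m, n)) :
  nuclear_norm A = \sum_(z <- eigenvalues (adjmx A *m A)) sqrtC z.
Proof. by rewrite /nuclear_norm /singular_values big_map. Qed.

Lemma nuclear_norm_adjmx m n (A : 'M[C]_(m, n)) : nuclear_norm (adjmx A) = nuclear_norm A.
Proof.
have := big_eigenvalues_mulmxC sqrtC A (adjmx A).
by rewrite !nuclear_normE adjmxK sqrtC0 !mul0rn !addr0.
Qed.

Lemma nuclear_norm_complement N m k k' (A : 'M[C]_(N, k)) (B : 'M[C]_(m, k))
    (B' : 'M[C]_(m, k')) :
  adjmx A *m A + adjmx B *m B = 1%:M -> B *m adjmx B + B' *m adjmx B' = 1%:M ->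
  nuclear_norm B' = nuclear_norm A + (m%:R - k%:R).
Proof.
move=> gramAB frameBB'.
have gramB : adjmx B *m B = 1%:M - adjmx A *m A by rewrite -gramAB addrC addKr.
have frameB' : B' *m adjmx B' = 1%:M - B *m adjmx B by rewrite -frameBB' addrC addKr.
have sumA : \sum_(z <- eigenvalues (adjmx B *m B)) sqrtC (1 - z) = nuclear_norm A.
  rewrite gramB (big_eigenvalues_scalar_sub _ 1 (adjmx A *m A)) nuclear_normE.
  by under eq_bigr do rewrite subKr.
have sumB' : \sum_(z <- eigenvalues (B *m adjmx B)) sqrtC (1 - z) = nuclear_norm B'.
  rewrite -nuclear_norm_adjmx nuclear_normE adjmxK frameB'.
  by rewrite (big_eigenvalues_scalar_sub _ 1 (B *m adjmx B)).
have := big_eigenvalues_mulmxC (fun z => sqrtC (1 - z)) B (adjmx B).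
by rewrite subr0 sqrtC1 sumA sumB' addrA => <-; rewrite addrK.
Qed.

End Spectrum.

Section Submatrices.
Variable C : numClosedFieldType.

Lemma adjmx_colsubset_mul n M (X Y : 'M[C]_(n, M)) (K : {set 'I_M}) :
  adjmx (colsubset X K) *m colsubset Y K = mxsub enum_val enum_val (adjmx X *m Y).
Proof. by apply/matrixP => a b; rewrite !mxE; apply: eq_bigr => i _; rewrite !mxE. Qed.

Lemma gram_colsubset n m M (X : 'M[C]_(n, M)) (Y : 'M[C]_(m, M)) (K : {set 'I_M}) :
  adjmx X *m X + adjmx Y *m Y = 1%:M ->
  adjmx (colsubset X K) *m colsubset X K + adjmx (colsubset Y K) *m colsubset Y K = 1%:M.
Proof.
rewrite !adjmx_colsubset_mul -raddfD /= => ->.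
by apply/matrixP => a b; rewrite !mxE (inj_eq enum_val_inj).
Qed.

Lemma mulmx_adj_colsubset_setC n M (X : 'M[C]_(n, M)) (K : {set 'I_M}) :
  X *m adjmx X = colsubset X K *m adjmx (colsubset X K)
                 + colsubset X (~: K) *m adjmx (colsubset X (~: K)).
Proof.
apply/matrixP => i j.
have sum_over (A : {set 'I_M}) : \sum_(l in A) X i l * adjmx X l j
    = (colsubset X A *m adjmx (colsubset X A)) i j.
  by rewrite mxE big_enum_val /=; apply: eq_bigr => a _; rewrite !mxE.
rewrite [RHS]mxE -!sum_over [LHS]mxE (bigID (mem K)) /=.
by congr (_ + _); apply: eq_bigl => l; rewrite inE.
Qed.

Lemma NE_naimark N m M k (Phi : 'M[C]_(N, M)) (Psi : 'M[C]_(m, M)) :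
  (k <= M)%N -> adjmx Phi *m Phi + adjmx Psi *m Psi = 1%:M ->
  Psi *m adjmx Psi = 1%:M ->
  NE (M - k) Psi = NE k Phi + (m%:R - k%:R) *+ 'C(M, k).
Proof.
move=> le_kM gram frame.
have -> : 'C(M, k) = #|[set K : {set 'I_M} | #|K| == k]| by rewrite card_draws card_ord.
rewrite /NE (reindex_inj (@setC_inj _)) /= -sumr_const.
have card_setC (K : {set 'I_M}) : (#|~: K| == M - k)%N = (#|K| == k).
  by rewrite [#|~: K|]cardsCs setCK card_ord; have := max_card K; rewrite card_ord; lia.
rewrite (eq_bigl _ _ card_setC) [X in _ + X](eq_bigl (fun K : {set 'I_M} => #|K| == k));
  last by move=> K; rewrite inE.
rewrite -big_split /=; apply: eq_bigr => K /eqP <-.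
by apply: nuclear_norm_complement (gram_colsubset K gram) _; rewrite -mulmx_adj_colsubset_setC.
Qed.

End Submatrices.

Section Completion.
Variable C : numClosedFieldType.

Lemma entries_inE b m n (A : 'M[C]_(m, n)) :
  entries_in b A = b ==> (A \is a mxOver Num.real).
Proof. by []. Qed.

Lemma entries_in0 b m n : entries_in b (0 : 'M[C]_(m, n)).
Proof. by rewrite entries_inE implybE mxOver0 ?orbT. Qed.

Lemma entries_in_col b m1 m2 n (A : 'M[C]_(m1, n)) (B : 'M[C]_(m2, n)) :
  entries_in b A -> entries_in b B -> entries_in b (col_mx A B).
Proof.
rewrite !entries_inE; case: b => //= /mxOverP realA /mxOverP realB.
by apply/mxOverP => i j; rewrite mxE; case: splitP => k _.
Qed.

Lemma mulmx_real_Re m n p (u : 'M[C]_(m, n)) (Y : 'M[C]_(n, p)) :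
  Y \is a mxOver Num.real -> map_mx (@Re _) (u *m Y) = map_mx (@Re _) u *m Y.
Proof.
move=> /mxOverP realY; apply/matrixP => i j; rewrite !mxE raddf_sum.
by apply: eq_bigr => l _; rewrite !mxE /= ReMr.
Qed.

Lemma mulmx_real_Im m n p (u : 'M[C]_(m, n)) (Y : 'M[C]_(n, p)) :
  Y \is a mxOver Num.real -> map_mx (@Im _) (u *m Y) = map_mx (@Im _) u *m Y.
Proof.
move=> /mxOverP realY; apply/matrixP => i j; rewrite !mxE raddf_sum.
by apply: eq_bigr => l _; rewrite !mxE /= ImMr.
Qed.

Lemma real_kernel_row m n (Y : 'M[C]_(m, n)) (u : 'rV[C]_m) :
  Y \is a mxOver Num.real -> u != 0 -> u *m Y = 0 ->
  exists2 w : 'rV[C]_m, (w != 0) && (w \is a mxOver Num.real) & w *m Y = 0.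
Proof.
move=> realY u_neq0 uY0.
have kerRe : map_mx (@Re _) u *m Y = 0.
  by rewrite -mulmx_real_Re // uY0; apply/matrixP => i j; rewrite !mxE raddf0.
have kerIm : map_mx (@Im _) u *m Y = 0.
  by rewrite -mulmx_real_Im // uY0; apply/matrixP => i j; rewrite !mxE raddf0.
have realRe : map_mx (@Re _) u \is a mxOver Num.real.
  by apply/mxOverP => i j; rewrite mxE Creal_Re.
have realIm : map_mx (@Im _) u \is a mxOver Num.real.
  by apply/mxOverP => i j; rewrite mxE Creal_Im.
have u_rect : u = map_mx (@Re _) u + 'i *: map_mx (@Im _) u.
  by apply/matrixP => i j; rewrite !mxE -Crect.
have [Re0 | ReN0] := eqVneq (map_mx (@Re _) u) 0.
  exists (map_mx (@Im _) u); rewrite // realIm andbT.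
  by apply: contraNneq u_neq0 => Im0; rewrite u_rect Re0 Im0 scaler0 addr0.
by exists (map_mx (@Re _) u); rewrite // ReN0.
Qed.

Lemma exists_orthogonal_row b p M (X : 'M[C]_(p, M)) : (p < M)%N -> entries_in b X ->
  exists2 w : 'rV[C]_M, (w != 0) && entries_in b w & w *m adjmx X = 0.
Proof.
move=> lt_pM realX.
have : kermx (adjmx X) != 0.
  rewrite -mxrank_eq0 mxrank_ker subn_eq0 -ltnNge.
  exact: leq_ltn_trans (rank_leq_col (adjmx X)) lt_pM.
case/rowV0Pn => u /sub_kermxP uX0 u_neq0.
case: b realX; last by exists u; rewrite ?u_neq0.
rewrite entries_inE => /mxOverP realX.
have realXt : adjmx X \is a mxOver Num.real.
  by apply/mxOverP => i j; rewrite mxE conj_Creal.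
have [w /andP [w_neq0 realw] wX0] := real_kernel_row realXt u_neq0 uX0.
by exists w; rewrite ?w_neq0.
Qed.

Lemma exists_unit_multiple b M (w : 'rV[C]_M) : w != 0 -> entries_in b w ->
  exists2 a : C, entries_in b (a *: w) & (a *: w) *m adjmx (a *: w) = 1%:M.
Proof.
move=> w_neq0 realw; set c := (w *m adjmx w) 0 0.
have cE : c = \sum_j `|w 0 j| ^+ 2.
  by rewrite /c mxE; apply: eq_bigr => j _; rewrite mxE normCK.
have c_ge0 : 0 <= c by rewrite cE sumr_ge0 // => j _; rewrite exprn_ge0.
have c_neq0 : c != 0.
  apply: contra w_neq0; rewrite cE psumr_eq0 => [/allP w0|j _]; last exact: exprn_ge0.
  apply/eqP/rowP => j; have := w0 j (mem_index_enum j).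
  by rewrite /= expf_eq0 normr_eq0 mxE => /andP [_ /eqP].
set s := sqrtC c; have real_s : s \is Num.real by rewrite sqrtC_real.
have s_neq0 : s != 0 by rewrite sqrtC_eq0.
exists s^-1.
  move: realw; rewrite !entries_inE; case: b => //=.
  by apply: mxOverZ; rewrite rpredV.
rewrite adjmxZ -scalemxAl -scalemxAr scalerA (mx11_scalar (w *m adjmx w)) -/c.
rewrite conj_Creal ?rpredV // scale_scalar_mx -(sqrtCK c) -/s.
by congr (_%:M); field.
Qed.

Lemma mulmx_adjC_eq0 m n p (A : 'M[C]_(m, n)) (B : 'M[C]_(p, n)) :
  A *m adjmx B = 0 -> B *m adjmx A = 0.
Proof. by move=> AB0; rewrite -[B]adjmxK -adjmxM AB0 adjmx0. Qed.

Lemma col_mx_orthonormal m1 m2 n (X : 'M[C]_(m1, n)) (Y : 'M[C]_(m2, n)) :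
  X *m adjmx X = 1%:M -> Y *m adjmx Y = 1%:M -> Y *m adjmx X = 0 ->
  col_mx X Y *m adjmx (col_mx X Y) = 1%:M.
Proof.
move=> frameX frameY YX0.
by rewrite adjmx_col mul_col_row frameX frameY YX0 (mulmx_adjC_eq0 YX0) -scalar_mx_block.
Qed.

Lemma naimark_orthogonal p q M (X : 'M[C]_(p, M)) (Y : 'M[C]_(q, M)) :
  X *m adjmx X = 1%:M -> Y *m adjmx Y = 1%:M ->
  adjmx X *m X + adjmx Y *m Y = 1%:M -> Y *m adjmx X = 0.
Proof.
move=> frameX frameY gram.
have YXX0 : Y *m adjmx X *m X = 0.
  move: (congr1 (mulmx Y) gram); rewrite mulmxDr mulmx1 !mulmxA frameY mul1mx.
  by move/(congr1 (fun Z => Z - Y)); rewrite addrK subrr.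
by rewrite -[LHS]mulmx1 -frameX !mulmxA YXX0 mul0mx.
Qed.

Lemma exists_orthonormal_row b p M (X : 'M[C]_(p, M)) : (p < M)%N -> entries_in b X ->
  exists v : 'rV[C]_M, [/\ entries_in b v, v *m adjmx v = 1%:M & v *m adjmx X = 0].
Proof.
move=> lt_pM realX.
have [w /andP [w_neq0 realw] wX0] := exists_orthogonal_row lt_pM realX.
have [a realaw unitaw] := exists_unit_multiple w_neq0 realw.
by exists (a *: w); split=> //; rewrite -scalemxAl wX0 scaler0.
Qed.

Lemma parseval_completion b M q p (X : 'M[C]_(p, M)) :
  (p + q = M)%N -> entries_in b X -> X *m adjmx X = 1%:M ->
  exists Y : 'M[C]_(q, M),
    [/\ entries_in b Y, Y *m adjmx Y = 1%:M & adjmx X *m X + adjmx Y *m Y = 1%:M].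
Proof.
elim: q p X => [|q IH] p X def_M realX frameX.
  rewrite addn0 in def_M; subst M; exists 0.
  split; [exact: entries_in0 | by apply/matrixP => -[] | ].
  by rewrite adjmx0 mul0mx addr0 mulmx1C.
have lt_pM : (p < M)%N by rewrite -def_M addnS ltnS leq_addr.
have [v [realv unitv vX0]] := exists_orthonormal_row lt_pM realX.
have frameXv := col_mx_orthonormal frameX unitv vX0.
have def_M' : (p + 1 + q = M)%N by rewrite -addnA add1n.
have [Y [realY frameY gramXvY]] := IH _ _ def_M' (entries_in_col realX realv) frameXv.
have Yv0 : Y *m adjmx v = 0.
  have := naimark_orthogonal frameXv frameY gramXvY.
  by rewrite adjmx_col mul_mx_row -row_mx0 => /eq_row_mx [_ ->].
have gramXvY' : adjmx X *m X + adjmx (col_mx v Y) *m col_mx v Y = 1%:M.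
  by rewrite adjmx_col mul_row_col addrA -gramXvY adjmx_col mul_row_col.
exists (col_mx v Y); split.
- exact: entries_in_col realv realY.
- exact: col_mx_orthonormal unitv frameY Yv0.
- (* [col_mx v Y] has [1 + q] rows and the goal [q.+1]: conversion bridges the two,
     rewriting with [adjmx_col] would not. *)
  by [].
Qed.

End Completion.

Unset Implicit Arguments.

Theorem proposition16 (R : realType) (realF : bool) (M N k : nat)
    (hMN : (N < M)%N) (hk : (k <= M)%N)
    (Phi : 'M[R[i]]_(N, M)) (Psi : 'M[R[i]]_(M - N, M)) :
  parseval realF Phi -> parseval realF Psi -> naimark_compl Phi Psi ->
  (maximizes_NE realF k Phi <-> maximizes_NE realF (M - k) Psi).
Proof.
move=> [_ framePhi] [_ framePsi] compl.
have gram : adjmx Phi *m Phi + adjmx Psi *m Psi = 1%:M by rewrite compl addrC subrK.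
set c : R[i] := ((M - N)%:R - k%:R) *+ 'C(M, k).
have shift (X : 'M_(N, M)) (Y : 'M_(M - N, M)) :
    adjmx X *m X + adjmx Y *m Y = 1%:M -> Y *m adjmx Y = 1%:M ->
    NE (M - k) Y = NE k X + c.
  exact: NE_naimark.
split=> maxNE Z [realZ frameZ].
- have [Z' [realZ' frameZ' gramZZ']] := parseval_completion (subnK (ltnW hMN)) realZ frameZ.
  have gramZ'Z : adjmx Z' *m Z' + adjmx Z *m Z = 1%:M by rewrite addrC.
  rewrite (shift _ _ gram framePsi) (shift _ _ gramZ'Z frameZ) lerD2r.
  exact: maxNE _ (conj realZ' frameZ').
- have [Z' [realZ' frameZ' gramZZ']] := parseval_completion (subnKC (ltnW hMN)) realZ frameZ.
  have := maxNE _ (conj realZ' frameZ').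
  by rewrite (shift _ _ gram framePsi) (shift _ _ gramZZ' frameZ') lerD2r.
Qed.
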